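(* Let $A$ be a real $n\times n$ matrix and $\mathbf{c},\mathbf{d}\in\mathbb{R}^n$ with $A+A^T=\mathbf{c}\mathbf{d}^T$, and let $K=A-\tfrac12\mathbf{c}\mathbf{d}^T$. Let $\lambda\in\mathbb{R}$ and let $(\mathbf{x},\pi)$ be an optimal solution of $LP(\lambda)$. Then for every $\mathbf{v}\in\mathbb{R}^n$ with $\mathbf{v}^T\mathbf{x}=\lambda$, the probability vector $\mathbf{x}$ is a symmetric Nash equilibrium of the bimatrix game $(Z,Z^T)$, where $Z=K+\tfrac12\mathbf{c}\mathbf{v}^T$.
   Context: For fixed $\lambda\in\mathbb{R}$, $LP(\lambda)$ is the linear program in variables $\mathbf{x}\in\mathbb{R}^n,\pi\in\mathbb{R}$: maximize $\tfrac12\lambda\,\mathbf{x}^T\mathbf{c}-\pi$ subject to $K\mathbf{x}+\tfrac{\lambda}{2}\mathbf{c}\le\pi\mathbf{1}$ (componentwise), $\mathbf{x}\ge0$, $\sum_ix_i=1$; $\mathbf{1}$ is the all-ones vector. For a square matrix $Z$, a probability vector $\mathbf{x}$ is a symmetric Nash equilibrium of $(Z,Z^T)$ if $(\mathbf{x},\mathbf{x})$ is a Nash equilibrium, equivalently, $x_i>0$ implies $(Z\mathbf{x})_i=\max_k(Z\mathbf{x})_k$. *)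

(* Real numbers are modelled by an arbitrary realFieldType
   (the statement is purely order-algebraic). *)
From HB Require Import structures.
From mathcomp Require Import all_boot all_order all_algebra.
Set Implicit Arguments. Unset Strict Implicit. Unset Printing Implicit Defensive.
Import Order.TTheory GRing.Theory Num.Theory.
Local Open Scope ring_scope.

Definition ones (R : realFieldType) (n : nat) : 'cV[R]_n := const_mx 1.

Definition prob_vec (R : realFieldType) (n : nat) (x : 'cV[R]_n) : Prop :=
  (forall i, 0 <= x i 0) /\ \sum_i x i 0 = 1.

Definition LP_feasible (R : realFieldType) (n : nat) (K : 'M[R]_n) (c : 'cV[R]_n)
    (lam : R) (x : 'cV[R]_n) (pi : R) : Prop :=
  (forall i, (K *m x + (lam / 2%:R) *: c) i 0 <= (pi *: ones R n) i 0) /\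
  prob_vec x.

Definition LP_obj (R : realFieldType) (n : nat) (c : 'cV[R]_n) (lam : R)
    (x : 'cV[R]_n) (pi : R) : R :=
  (1 / 2%:R) * lam * (x^T *m c) 0 0 - pi.

Definition LP_optimal (R : realFieldType) (n : nat) (K : 'M[R]_n) (c : 'cV[R]_n)
    (lam : R) (x : 'cV[R]_n) (pi : R) : Prop :=
  LP_feasible K c lam x pi /\
  forall (x' : 'cV[R]_n) (pi' : R), LP_feasible K c lam x' pi' ->
    LP_obj c lam x' pi' <= LP_obj c lam x pi.

(* x is a symmetric Nash equilibrium of the bimatrix game (Z, Z^T):
   x is a probability vector and x_i > 0 implies (Z x)_i = max_k (Z x)_k *)
Definition sym_nash (R : realFieldType) (n : nat) (Z : 'M[R]_n) (x : 'cV[R]_n) : Prop :=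
  prob_vec x /\
  forall i, 0 < x i 0 -> forall k, (Z *m x) k 0 <= (Z *m x) i 0.

(* Since [A + A^T = c d^T], the matrix [K] is skew-symmetric, so [x^T K x = 0]
   and at a feasible point the objective of LP(lambda) is minus the
   complementary slackness [sum_i x_i (pi - (K x + lambda/2 c)_i)], hence
   nonpositive.  The skew-symmetric game [K_ij + h_i - h_j], [h = lambda/2 c],
   has value 0 (minimax from Farkas' lemma, itself proved by Fourier-Motzkin
   elimination); its optimal strategy is a feasible point of objective 0.  So an
   optimal [x] has zero slackness: every [i] in its support maximizes
   [(K x + lambda/2 c)_i], and this vector is [Z x] because [v^T x = lambda]. *)

From mathcomp Require Import all_boot all_order all_algebra.
From mathcomp Require Import ring lra.
Import Order.TTheory GRing.Theory Num.Theory.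
Local Open Scope ring_scope.

Section Farkas.
Context {R : realFieldType}.

Lemma sumr_delta_l (I : finType) (p : I) (F : I -> R) :
  \sum_i (i == p)%:R * F i = F p.
Proof.
rewrite (bigD1 p) //= eqxx mul1r big1 ?addr0 // => i /negbTE ->.
by rewrite mul0r.
Qed.

Lemma sumr_delta_r (I : finType) (p : I) (F : I -> R) :
  \sum_i F i * (p == i)%:R = F p.
Proof. by rewrite -[RHS](sumr_delta_l _ p); apply: eq_bigr => i _; rewrite mulrC eq_sym. Qed.

(* Row weights of the Fourier-Motzkin system: rows with [an k = 0] are kept and
   each pair of rows with [an p > 0 > an q] is combined to cancel the last
   variable. *)
Definition fm_weight {I : finType} (an : I -> R) (j : I + I * I) (i : I) : R :=
  match j with
  | inl k => if an k == 0 then (i == k)%:R else 0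
  | inr (p, q) => if (0 < an p) && (an q < 0)
      then (i == p)%:R * - an q + (i == q)%:R * an p else 0
  end.

Lemma fm_weight_ge0 (I : finType) (an : I -> R) j i : 0 <= fm_weight an j i.
Proof.
case: j => [k|[p q]] /=; first by case: ifP.
case: ifP => // /andP[p_pos q_neg].
by apply: addr_ge0; apply: mulr_ge0; rewrite ?ler0n ?oppr_ge0 ?ltW.
Qed.

Lemma sum_fm_weight (I : finType) (an F : I -> R) j :
  \sum_i fm_weight an j i * F i =
  match j with
  | inl k => if an k == 0 then F k else 0
  | inr (p, q) => if (0 < an p) && (an q < 0)
      then - an q * F p + an p * F q else 0
  end.
Proof.
case: j => [k|[p q]] /=;
  (case: ifP => _; last by rewrite big1 // => i _; rewrite mul0r).
  exact: sumr_delta_l.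
under eq_bigr => i _ do rewrite mulrDl -!mulrA.
by rewrite big_split /= !sumr_delta_l.
Qed.

Lemma fm_weight_elim (I : finType) (an : I -> R) j :
  \sum_i fm_weight an j i * an i = 0.
Proof.
rewrite sum_fm_weight; case: j => [k|[p q]]; case: ifP => //.
  by move/eqP.
by rewrite mulNr mulrC addNr.
Qed.

(* One-variable step of Fourier-Motzkin: the pairwise conditions say that
   every upper bound [e p / an p] dominates every lower bound [e q / an q]. *)
Lemma fm_solve_last (I : finType) (an e : I -> R) :
  (forall i, an i = 0 -> 0 <= e i) ->
  (forall p q, 0 < an p -> an q < 0 -> 0 <= - an q * e p + an p * e q) ->
  exists t, forall i, an i * t <= e i.
Proof.
move=> zero_row pair_row.
have [q0 q0_neg|no_neg] := pickP (fun q => an q < 0).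
  have [q q_neg q_max] :=
    @arg_maxP _ _ _ q0 (fun q => an q < 0) (fun q => e q / an q) q0_neg.
  exists (e q / an q) => i; rewrite mulrC.
  case: (ltgtP (an i) 0) => ani; last by rewrite ani mulr0 zero_row.
    by rewrite -ler_ndivrMr //; apply: q_max.
  rewrite -ler_pdivlMr // ler_ndivrMr // mulrAC ler_pdivrMr //.
  by have := pair_row i q ani q_neg; lra.
exists (- \sum_i `|e i / an i|) => i; rewrite mulrC.
case: (ltgtP (an i) 0) => ani; last by rewrite ani mulr0 zero_row.
  by have := no_neg i; rewrite /= ani.
rewrite -ler_pdivlMr //; apply: lerNnormlW.
by rewrite (bigD1 i) //= lerDl sumr_ge0.
Qed.

Lemma widen_ord_max n (k : 'I_n) : widen_ord (leqnSn n) k = lift ord_max k.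
Proof. by apply: val_inj; rewrite /= /bump leqNgt ltn_ord. Qed.

Lemma farkas {n} {I : finType} (a : I -> 'I_n -> R) (b : I -> R) :
  (exists x : 'I_n -> R, forall i, \sum_k a i k * x k <= b i) \/
  (exists l : I -> R, [/\ forall i, 0 <= l i,
     forall k, \sum_i l i * a i k = 0 & \sum_i l i * b i < 0]).
Proof.
elim: n I a b => [|n IH] I a b.
  have [i0 b_neg|b_ge0] := pickP (fun i => b i < 0).
    right; exists (fun i => (i == i0)%:R).
    by split=> [i||]; [rewrite ler0n | case | rewrite sumr_delta_l].
  left; exists (fun _ => 0) => i; rewrite big_ord0 leNgt.
  by have /= -> := b_ge0 i.
pose an i := a i ord_max.
pose a' i (k : 'I_n) := a i (lift ord_max k).
pose a2 j k := \sum_i fm_weight an j i * a' i k.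
pose b2 j := \sum_i fm_weight an j i * b i.
have [[x' sol'] | [l' [l'_ge0 l'_a l'_b]]] := IH _ a2 b2; last first.
  right; exists (fun i => \sum_j l' j * fm_weight an j i).
  have swap (F : I -> R) : \sum_i (\sum_j l' j * fm_weight an j i) * F i =
                           \sum_j l' j * \sum_i fm_weight an j i * F i.
    under eq_bigr do rewrite mulr_suml.
    rewrite exchange_big /=; apply: eq_bigr => j _; rewrite mulr_sumr.
    by apply: eq_bigr => i _; rewrite mulrA.
  split=> [i|k|]; last by rewrite swap.
    by apply: sumr_ge0 => j _; rewrite mulr_ge0 ?fm_weight_ge0.
  rewrite swap; case: (unliftP ord_max k) => [k'|] ->; first exact: l'_a k'.
  by rewrite big1 // => j _; rewrite fm_weight_elim mulr0.
pose e i := b i - \sum_k a' i k * x' k.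
have e_comb j : 0 <= \sum_i fm_weight an j i * e i.
  suff -> : \sum_i fm_weight an j i * e i = b2 j - \sum_k a2 j k * x' k.
    by rewrite subr_ge0.
  rewrite /e; under eq_bigr do rewrite mulrBr mulr_sumr.
  rewrite sumrB exchange_big /=; congr (_ - _); apply: eq_bigr => k _.
  by rewrite mulr_suml; apply: eq_bigr => i _; rewrite mulrA.
have [t sol_t] : exists t, forall i, an i * t <= e i.
  apply: fm_solve_last => [i an0|p q p_pos q_neg].
    by have := e_comb (inl i); rewrite sum_fm_weight an0 eqxx.
  by have := e_comb (inr (p, q)); rewrite sum_fm_weight p_pos q_neg.
left; exists (fun k => if unlift ord_max k is Some k' then x' k' else t) => i.
rewrite big_ord_recr /= unlift_none.
under eq_bigr do rewrite widen_ord_max liftK.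
by have := sol_t i; rewrite /e /a' /an; lra.
Qed.

End Farkas.

Section SkewSymmetricGame.
Context {R : realFieldType}.

Lemma skew_quadratic_form {I : finType} (M : I -> I -> R) (u : I -> R) :
  (forall i j, M i j + M j i = 0) -> \sum_i u i * \sum_j M i j * u j = 0.
Proof.
move=> M_skew.
pose Q := \sum_i \sum_j u i * u j * M i j.
have -> : \sum_i u i * \sum_j M i j * u j = Q.
  by apply: eq_bigr => i _; rewrite mulr_sumr; apply: eq_bigr => j _; ring.
have : Q = - Q.
  rewrite /Q -sumrN exchange_big /=; apply: eq_bigr => j _; rewrite -sumrN.
  apply: eq_bigr => i _.
  by have /eqP := M_skew i j; rewrite addr_eq0 => /eqP ->; ring.
by move/eqP; rewrite -addr_eq0 -mulr2n mulrn_eq0 /= => /eqP.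
Qed.

(* A skew-symmetric game has value 0: some mixed strategy guarantees [M y <= 0].
   By Farkas, otherwise there is [nu >= 0] with [nu^T M > 0] componentwise,
   contradicting [nu^T M nu = 0]. *)
Lemma skew_symmetric_game_value {n} (M : 'I_n -> 'I_n -> R) : (0 < n)%N ->
  (forall i j, M i j + M j i = 0) ->
  exists y : 'I_n -> R, [/\ forall i, 0 <= y i, \sum_i y i = 1 &
    forall i, \sum_j M i j * y j <= 0].
Proof.
move=> n_gt0 M_skew.
(* rows: [- y_i <= 0], [(M y)_i <= 0], [sum y <= 1], [- sum y <= -1] *)
pose a (r : 'I_n + 'I_n + bool) (k : 'I_n) : R :=
  match r with
  | inl (inl i) => - (k == i)%:R | inl (inr i) => M i k
  | inr true => 1 | inr false => -1 end.
pose b (r : 'I_n + 'I_n + bool) : R :=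
  match r with inr true => 1 | inr false => -1 | _ => 0 end.
have sum_rows (F : 'I_n + 'I_n + bool -> R) : \sum_r F r =
    \sum_i F (inl (inl i)) + \sum_i F (inl (inr i)) + (F (inr true) + F (inr false)).
  by rewrite big_sumType /= big_sumType /= big_bool.
have [[y sol_y]|[l [l_ge0 l_a l_b]]] := farkas a b.
  exists y; split=> [i||i]; last exact: sol_y (inl (inr i)).
    have := sol_y (inl (inl i)); under eq_bigr do rewrite mulNr.
    by rewrite sumrN sumr_delta_l oppr_le0.
  move: (sol_y (inr true)) (sol_y (inr false)) => /=.
  rewrite (eq_bigr _ (fun k _ => mul1r (y k))) (eq_bigr _ (fun k _ => mulN1r (y k))).
  by rewrite sumrN; lra.
pose nu i := l (inl (inr i)).
pose S k := \sum_i nu i * M i k.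
have l_tf : l (inr true) < l (inr false).
  by move: l_b; rewrite sum_rows /= !big1 => [|i _|i _]; rewrite ?mulr0 //; lra.
have S_pos k : 0 < S k.
  have := l_a k; rewrite sum_rows /=; under eq_bigr do rewrite mulrN.
  by rewrite sumrN sumr_delta_r; have := l_ge0 (inl (inl k)); rewrite /S /nu; lra.
have nuS0 : \sum_k nu k * S k = 0.
  rewrite -[RHS](skew_quadratic_form (fun k i => M i k) nu) => [|i j]; last first.
    by rewrite addrC.
  by apply: eq_bigr => k _; congr (_ * _); apply: eq_bigr => i _; rewrite mulrC.
have nu0 k : nu k = 0.
  have /eqP := psumr_eq0P (fun k _ => mulr_ge0 (l_ge0 _) (ltW (S_pos k))) nuS0 (i := k) isT.
  by rewrite mulf_eq0 (gt_eqF (S_pos k)) orbF => /eqP.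
by have := S_pos (Ordinal n_gt0); rewrite /S big1 ?ltxx // => i _; rewrite nu0 mul0r.
Qed.
End SkewSymmetricGame.

Lemma prob_vec_dim_gt0 {R : realFieldType} {n : nat} {x : 'cV[R]_n} :
  prob_vec x -> (0 < n)%N.
Proof.
by case: n x => // x [_]; rewrite big_ord0 => /eqP; rewrite eq_sym oner_eq0.
Qed.

Section SkewSymmetricLP.
Context {R : realFieldType} {n : nat} {K : 'M[R]_n} {c : 'cV[R]_n} {lam : R}.
Hypothesis K_skew : forall i j, K i j + K j i = 0.

Lemma LP_feasible_le {x pi} : LP_feasible K c lam x pi ->
  forall i, (K *m x + (lam / 2%:R) *: c) i 0 <= pi.
Proof.
by move=> [x_feas _] i; apply: le_trans (x_feas i) _; rewrite /ones !mxE mulr1.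
Qed.

Lemma LP_obj_slack x pi : prob_vec x ->
  LP_obj c lam x pi = - \sum_i x i 0 * (pi - (K *m x + (lam / 2%:R) *: c) i 0).
Proof.
move=> [_ x_sum1].
have xKx : \sum_i x i 0 * (K *m x) i 0 = 0.
  rewrite -[RHS](skew_quadratic_form _ (fun i => x i 0) K_skew).
  by apply: eq_bigr => i _; rewrite mxE.
have -> : \sum_i x i 0 * (pi - (K *m x + (lam / 2%:R) *: c) i 0) =
    pi * \sum_i x i 0 - \sum_i x i 0 * (K *m x) i 0 - lam / 2%:R * \sum_i x i 0 * c i 0.
  rewrite !mulr_sumr -!sumrB; apply: eq_bigr => i _; rewrite !mxE; ring.
rewrite xKx x_sum1 /LP_obj mxE; under eq_bigr do rewrite mxE.
ring.
Qed.

Lemma exists_LP_feasible_obj0 : (0 < n)%N ->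
  exists x pi, LP_feasible K c lam x pi /\ LP_obj c lam x pi = 0.
Proof.
move=> n_gt0; pose h i := lam / 2%:R * c i 0.
have [|y [y_ge0 y_sum1 y_sol]] :=
  skew_symmetric_game_value (fun i j => K i j + h i - h j) n_gt0.
  by move=> i j; have := K_skew i j; lra.
exists (\col_i y i), (\sum_j h j * y j); split; first split.
- move=> i; rewrite !mxE; under eq_bigr do rewrite mxE.
  have := y_sol i.
  rewrite (eq_bigr (fun j => K i j * y j + h i * y j - h j * y j)) => [|j _]; last by ring.
  by rewrite sumrB big_split /= -mulr_sumr y_sum1 /h; lra.
- by split=> [i|]; [rewrite mxE | rewrite -y_sum1; apply: eq_bigr => i _; rewrite mxE].
rewrite /LP_obj mxE; under eq_bigr do rewrite !mxE.
by rewrite !mulr_sumr -sumrB big1 // => j _; rewrite /h; ring.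
Qed.

Lemma LP_optimal_tight {x pi i} : LP_optimal K c lam x pi ->
  0 < x i 0 -> (K *m x + (lam / 2%:R) *: c) i 0 = pi.
Proof.
move=> [x_feas x_max] xi_gt0; have x_prob := x_feas.2.
have [y [rho [y_feas y_obj0]]] := exists_LP_feasible_obj0 (prob_vec_dim_gt0 x_prob).
pose slack j := x j 0 * (pi - (K *m x + (lam / 2%:R) *: c) j 0).
have slack_ge0 j : 0 <= slack j.
  by rewrite mulr_ge0 ?x_prob.1 // subr_ge0 (LP_feasible_le x_feas).
have slack_sum0 : \sum_j slack j = 0.
  apply/eqP; rewrite eq_le (sumr_ge0 _ (fun j _ => slack_ge0 j)) andbT.
  by have := x_max _ _ y_feas; rewrite y_obj0 LP_obj_slack // oppr_ge0.
have /eqP := psumr_eq0P (fun j _ => slack_ge0 j) slack_sum0 (i := i) isT.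
by rewrite mulf_eq0 (gt_eqF xi_gt0) subr_eq0 eq_sym => /eqP.
Qed.
End SkewSymmetricLP.

Theorem lemma4p4 (R : realFieldType) (n : nat) (A : 'M[R]_n) (c d : 'cV[R]_n)
    (hA : A + A^T = c *m d^T) (lam : R) (x : 'cV[R]_n) (pi : R)
    (hopt : LP_optimal (A - (1 / 2%:R) *: (c *m d^T)) c lam x pi) :
  forall v : 'cV[R]_n, (v^T *m x) 0 0 = lam ->
    sym_nash ((A - (1 / 2%:R) *: (c *m d^T)) + (1 / 2%:R) *: (c *m v^T)) x.
Proof.
move=> v v_x; set K := A - _ in hopt *.
have K_skew i j : K i j + K j i = 0.
  have := congr1 (fun M : 'M_n => M i j) hA; have := congr1 (fun M : 'M_n => M j i) hA.
  by rewrite /K !mxE => ji ij; lra.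
have Zx : (K + (1 / 2%:R) *: (c *m v^T)) *m x = K *m x + (lam / 2%:R) *: c.
  rewrite mulmxDl -scalemxAl -mulmxA [v^T *m x]mx11_scalar v_x mul_mx_scalar.
  by rewrite scalerA mul1r mulrC.
split=> [|i xi_gt0 k]; first exact: hopt.1.2.
have tight := LP_optimal_tight K_skew hopt xi_gt0.
by rewrite Zx tight; apply: LP_feasible_le hopt.1 k.
Qed.
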